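(* Let $A$ be a finite set of actions and let $\{\pi_\theta\}_{\theta\in\mathbb{R}^d}$ be a family of probability distributions on $A$ with $\pi_\theta(a)>0$ and $\theta\mapsto\pi_\theta(a)$ differentiable for every $a\in A$. Let $R:A\to\mathbb{R}$ be the reward function, let $A$ also denote the random action drawn from $\pi_\theta$, and write $R=R(A)$. Define $\eta_s(\theta):=\mathbb{E}_{a\sim\pi_\theta}[R(a)]$, $g_s(\theta):=\nabla_\theta\eta_s(\theta)$ and $S_\theta(a):=\nabla_\theta\log\pi_\theta(a)$, and assume $\|S_\theta(a)\|\le G_{\max}$ and $|R(a)|\le R_{\max}$ for all $a\in A$. Suppose the rewards take values in an interval $[R_{lo},R_{hi}]\subseteq[-R_{\max},R_{\max}]$ which is partitioned into $B$ consecutive non-overlapping intervals $B_1,\dots,B_B$, each of the form $B_k=[b_k,b_k+\Delta)$ of common length $\Delta>0$, with midpoints $m_k:=b_k+\Delta/2$, and let the discretized reward be $\tilde R:=k$ if and only if $R\in B_k$. Then $$\|g_s(\theta)\|\le \sqrt{2}\,G_{\max}R_{\max}\sqrt{I(A;\tilde R)}+G_{\max}\Delta .$$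
   Context: One-shot game (horizon one): the state is fixed, the agent draws $a\sim\pi_\theta$ and receives reward $R(a)$. $\|\cdot\|$ is the Euclidean norm; $I(A;\tilde R)$ is the mutual information (natural logarithm) between the action $A\sim\pi_\theta$ and the bin index $\tilde R$. *)

From HB Require Import structures.
From mathcomp Require Import all_boot all_order all_algebra.
From mathcomp Require Import all_classical all_reals all_analysis.
Set Implicit Arguments. Unset Strict Implicit. Unset Printing Implicit Defensive.
Import Order.TTheory GRing.Theory Num.Theory.
Import numFieldNormedType.Exports.
Local Open Scope ring_scope.

Definition grad (R : realType) (d : nat) (f : 'rV[R]_d -> R) (x : 'rV[R]_d)
  : 'rV[R]_d := \row_(i < d) ('D_(delta_mx 0 i) f x).

Definition enorm (R : realType) (d : nat) (v : 'rV[R]_d) : R :=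
  Num.sqrt (\sum_(i < d) v 0 i ^+ 2).

Definition inbin (R : realType) (b delta r : R) : bool := (b <= r) && (r < b + delta).

Definition mutual_info (R : realType) (X Y : finType) (P : X -> Y -> R) : R :=
  \sum_(x : X) \sum_(y : Y)
    (if 0 < P x y then
       P x y * ln (P x y / ((\sum_(y' : Y) P x y') * (\sum_(x' : X) P x' y)))
     else 0).

(* Joint pmf of (A, Rtilde): bins B_k = [Rlo + k*delta, Rlo + (k+1)*delta),
   k : 'I_B, and Rtilde = k iff R(A) in B_k. *)
Definition joint_A_Rtilde (R : realType) (d : nat) (A : finType)
  (pi : 'rV[R]_d -> A -> R) (theta : 'rV[R]_d) (rew : A -> R)
  (Rlo delta : R) (B : nat) (a : A) (k : 'I_B) : R :=
  pi theta a * (inbin (Rlo + k%:R * delta) delta (rew a))%:R.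

(* The score S(a) = grad ln pi(a) is centred: E[S(A)] = 0, and g = E[R(A) S(A)].
   Replacing R(A) by the midpoint m of its bin moves g by at most G_max Delta / 2.
   Since S is centred, E[m(Rt) S(A)] = sum_(a,k) (P(a,k) - pi(a) rho(k)) m_k S(a), where P is
   the joint law of (A, Rt) and rho the law of Rt; its norm is therefore at most
   R_max G_max |P - pi (x) rho|_1 <= R_max G_max sqrt (2 KL(P | pi (x) rho))
   = sqrt 2 R_max G_max sqrt (I(A; Rt)) by Pinsker's inequality.  Pinsker in turn follows from
   Cauchy-Schwarz and the pointwise bound 3 (p - q)^2 <= (2p + 4q) (p ln (p/q) - p + q),
   which is a two-step mean value argument around p = q. *)

From mathcomp Require Import all_boot all_order all_algebra.
From mathcomp Require Import all_classical all_reals all_analysis.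
From mathcomp Require Import ring lra.
Set Implicit Arguments.
Unset Strict Implicit.
Unset Printing Implicit Defensive.
Import Order.TTheory GRing.Theory Num.Theory.
Import numFieldNormedType.Exports.
Local Open Scope ring_scope.

Section LnInequalities.
Variable R : realType.
Implicit Types x y : R.

Lemma MVT_at1 (f df : R -> R) x : 0 < x ->
  (forall y, 0 < y -> is_derive y 1 f (df y)) ->
  exists c, [/\ 0 < c, f x - f 1 = df c * (x - 1),
              (x < 1 -> c < 1) & (1 < x -> 1 < c)].
Proof.
move=> x0 fD.
have mvt a b : 0 < a -> a < b ->
    exists2 c, c \in `]a, b[ & f b - f a = df c * (b - a).
  move=> a0 ab; apply: MVT ab _ _ => [y|].
    by rewrite in_itv /= => /andP[ay _]; apply: fD; apply: lt_trans ay.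
  apply: derivable_within_continuous => y; rewrite in_itv /= => /andP[ay _].
  by have [] := fD y (lt_le_trans a0 ay).
have [x1|x1|->] := ltgtP x 1.
- have [c] := mvt _ _ x0 x1; rewrite in_itv /= => /andP[xc c1] E.
  exists c; split => //; first exact: lt_trans xc.
  by rewrite -opprB E; ring.
- have [c] := mvt _ _ ltr01 x1; rewrite in_itv /= => /andP[c1 cx] E.
  exists c; split => //; first exact: lt_trans c1.
- by exists 1; split; rewrite ?ltxx // !subrr mulr0.
Qed.

Lemma ln_ge_1Vx x : 0 < x -> 1 - x^-1 <= ln x.
Proof.
move=> x0; have := @le_ln1Dx R (x^-1 - 1).
by rewrite [1 + _]addrC subrK lnV ?posrE // ltrBrDl subrr invr_gt0 => /(_ x0); lra.
Qed.

Let scaleE x y : x *: y = x * y := erefl.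

Lemma ln_pade_sign x : 0 < x -> 0 <= (x - 1) * ((x + 1) * ln x - 2 * (x - 1)).
Proof.
pose k y := (y + 1) * ln y - 2 * (y - 1).
have kD y : 0 < y -> is_derive y 1 k (ln y + (y + 1) / y - 2).
  by move=> y0; have ? := is_derive1_ln y0; apply: is_derive_eq; rewrite !scaleE; ring.
have k1 : k 1 = 0 by rewrite /k ln1; ring.
move=> x0; have [c [c0 + _ _]] := MVT_at1 x0 kD.
rewrite k1 subr0 /k => ->; rewrite mulrCA mulr_ge0 ?sqr_ge0 //.
by have := ln_ge_1Vx c0; rewrite [(c + 1) / c]mulrDl divff ?gt_eqF // mul1r; lra.
Qed.

Lemma pinsker_ln_ineq x : 0 < x -> (x - 1) * (5 * x + 1) <= 2 * x * (x + 2) * ln x.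
Proof.
pose h y := 2 * y * (y + 2) * ln y - (y - 1) * (5 * y + 1).
have hD y : 0 < y -> is_derive y 1 h (4 * ((y + 1) * ln y - 2 * (y - 1))).
  move=> y0; have ? := is_derive1_ln y0; apply: is_derive_eq; rewrite !scaleE.
  by field; rewrite gt_eqF.
have h1 : h 1 = 0 by rewrite /h ln1; ring.
move=> x0; rewrite -subr_ge0; have [c [c0 + lt1 gt1]] := MVT_at1 x0 hD.
rewrite h1 subr0 /h => ->.
have := ln_pade_sign c0.
have [/lt1 c1|/gt1 c1|->] := ltgtP x 1; last by rewrite subrr mulr0.
all: set L := _ - _ * (c - 1); nra.
Qed.

Definition kl_term (p q : R) := if 0 < p then p * ln (p / q) else 0.

Lemma kl_term_pinsker p q : 0 <= p -> 0 < q ->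
  3 * (p - q) ^+ 2 <= (2 * p + 4 * q) * (kl_term p q - p + q).
Proof.
rewrite le0r /kl_term => /orP[/eqP-> q0|p0 q0]; first by rewrite ltxx; nra.
rewrite p0; have := pinsker_ln_ineq (divr_gt0 p0 q0).
have t0 := divr_gt0 p0 q0; set t := p / q in t0 *.
have -> : p = t * q by rewrite /t divfK ?gt_eqF.
move: (ln t) => L H; nra.
Qed.

End LnInequalities.

Lemma cauchy_schwarz (R : realDomainType) (J : finType) (u v : J -> R) :
  (\sum_j u j * v j) ^+ 2 <= (\sum_j u j ^+ 2) * (\sum_j v j ^+ 2).
Proof.
have lagrange : \sum_i \sum_j (u i * v j - u j * v i) ^+ 2 =
    2 * ((\sum_j u j ^+ 2) * (\sum_j v j ^+ 2) - (\sum_j u j * v j) ^+ 2).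
  have e i j : (u i * v j - u j * v i) ^+ 2 =
      u i ^+ 2 * v j ^+ 2 + v i ^+ 2 * u j ^+ 2 - 2 * (u i * v i) * (u j * v j).
    by ring.
  under eq_bigr => i _ do under eq_bigr => j _ do rewrite e.
  under eq_bigr do rewrite sumrB big_split.
  rewrite sumrB big_split /= -!big_distrlr /= -mulr_sumr; ring.
rewrite -subr_ge0 -(pmulr_rge0 _ (ltr0Sn R 1)) -lagrange.
by apply: sumr_ge0 => i _; apply: sumr_ge0 => j _; apply: sqr_ge0.
Qed.

Lemma sum_sqrtrM_le (R : rcfType) (J : finType) (a b : J -> R) :
  (forall j, 0 <= a j) -> (forall j, 0 <= b j) ->
  \sum_j Num.sqrt (a j) * Num.sqrt (b j) <=
    Num.sqrt (\sum_j a j) * Num.sqrt (\sum_j b j).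
Proof.
have sqK (f : J -> R) : (forall j, 0 <= f j) -> \sum_j Num.sqrt (f j) ^+ 2 = \sum_j f j.
  by move=> f0; apply: eq_bigr => j _; rewrite sqr_sqrtr.
move=> a0 b0; rewrite -sqrtrM ?sumr_ge0 //; apply: le_trans (ler_norm _) _.
by rewrite -sqrtr_sqr ler_wsqrtr // -(sqK a) // -(sqK b) // cauchy_schwarz.
Qed.

Definition kl_div (R : realType) (J : finType) (p q : J -> R) : R :=
  \sum_j kl_term (p j) (q j).

Lemma pinsker (R : realType) (J : finType) (p q : J -> R) :
  (forall j, 0 <= p j) -> (forall j, 0 <= q j) -> (forall j, q j = 0 -> p j = 0) ->
  \sum_j p j = 1 -> \sum_j q j = 1 ->
  \sum_j `|p j - q j| <= Num.sqrt (2 * kl_div p q).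
Proof.
move=> p0 q0 qp sp sq.
pose a j := (2 * p j + 4 * q j) / 3; pose b j := kl_term (p j) (q j) - p j + q j.
have a0 j : 0 <= a j by rewrite /a; have := p0 j; have := q0 j; lra.
have ab j : (p j - q j) ^+ 2 <= a j * b j /\ 0 <= b j.
  have := q0 j; rewrite le0r /a /b => /orP[/eqP qj0|qj_gt0].
    by rewrite qj0 (qp _ qj0) /kl_term ltxx; split; lra.
  have := kl_term_pinsker (p0 j) qj_gt0; have := sqr_ge0 (p j - q j).
  have := p0 j; move: (kl_term _ _) => K pj0 sq0 H.
  by split; nra.
apply: le_trans (_ : \sum_j Num.sqrt (a j) * Num.sqrt (b j) <= _).
  apply: ler_sum => j _; rewrite -sqrtrM // -sqrtr_sqr.
  by apply: ler_wsqrtr; case: (ab j).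
apply: le_trans (sum_sqrtrM_le a0 (fun j => (ab j).2)) _.
have -> : \sum_j a j = 2 by rewrite /a -mulr_suml big_split -!mulr_sumr /= sp sq; lra.
have -> : \sum_j b j = kl_div p q.
  by rewrite /b big_split sumrB /= sp sq addrNK.
by rewrite sqrtrM.
Qed.

Section EuclideanNorm.
Variables (R : realType) (d : nat).
Implicit Types u v : 'rV[R]_d.

Lemma enorm_ge0 v : 0 <= enorm v.
Proof. exact: sqrtr_ge0. Qed.

Lemma sqr_enorm v : enorm v ^+ 2 = \sum_i v 0 i ^+ 2.
Proof. by rewrite sqr_sqrtr // sumr_ge0 // => i _; apply: sqr_ge0. Qed.

Lemma enormZ (c : R) v : enorm (c *: v) = `|c| * enorm v.
Proof.
rewrite /enorm -sqrtr_sqr -sqrtrM ?sqr_ge0 // mulr_sumr.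
by congr Num.sqrt; apply: eq_bigr => i _; rewrite mxE exprMn.
Qed.

Lemma enormD u v : enorm (u + v) <= enorm u + enorm v.
Proof.
have uv : \sum_i u 0 i * v 0 i <= enorm u * enorm v.
  rewrite -sqrtrM ?sumr_ge0 // => [|i _]; last exact: sqr_ge0.
  apply: le_trans (ler_norm _) _; rewrite -sqrtr_sqr ler_wsqrtr //.
  exact: cauchy_schwarz.
rewrite -(@ler_pXn2r _ 2) ?nnegrE ?addr_ge0 ?enorm_ge0 // sqrrD !sqr_enorm.
have -> : \sum_i (u + v) 0 i ^+ 2 =
    \sum_i u 0 i ^+ 2 + 2 * \sum_i u 0 i * v 0 i + \sum_i v 0 i ^+ 2.
  by rewrite mulr_sumr -!big_split /=; apply: eq_bigr => i _; rewrite mxE; ring.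
lra.
Qed.

Lemma enorm_sumZ_le (J : finType) (c : J -> R) (w : J -> 'rV[R]_d) :
  enorm (\sum_j c j *: w j) <= \sum_j `|c j| * enorm (w j).
Proof.
elim/big_ind2: _ => [|? ? ? ? le1 le2|j _]; last by rewrite enormZ.
  by rewrite /enorm big1 ?sqrtr0 // => i _; rewrite mxE expr0n.
exact: le_trans (enormD _ _) (lerD le1 le2).
Qed.

Lemma enorm_expectation_le (J : finType) (p c : J -> R) (w : J -> 'rV[R]_d) (e G : R) :
  (forall j, 0 <= p j) -> \sum_j p j = 1 ->
  (forall j, `|c j| <= e) -> (forall j, enorm (w j) <= G) ->
  enorm (\sum_j (p j * c j) *: w j) <= e * G.
Proof.
move=> p0 p1 ce wG; apply: le_trans (enorm_sumZ_le _ _) _.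
rewrite -[leRHS]mul1r -p1 mulr_suml; apply: ler_sum => j _.
by rewrite normrM ger0_norm // -mulrA ler_wpM2l // ler_pM ?normr_ge0 ?enorm_ge0.
Qed.

End EuclideanNorm.

Section MutualInformation.
Variables (R : realType) (A K : finType) (P : A -> K -> R).
Hypothesis P_ge0 : forall a k, 0 <= P a k.
Hypothesis P_sum1 : \sum_a \sum_k P a k = 1.

Let pA a := \sum_k P a k.
Let pK k := \sum_a P a k.

Lemma pinsker_mutual_info :
  \sum_(ak : A * K) `|P ak.1 ak.2 - pA ak.1 * pK ak.2|
    <= Num.sqrt 2 * Num.sqrt (mutual_info P).
Proof.
pose Q a k := pA a * pK k.
have Q_sum1 : \sum_a \sum_k Q a k = 1.
  by rewrite /Q -big_distrlr /= /pA /pK P_sum1 exchange_big P_sum1 mulr1.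
have Q_ge0 ak : 0 <= Q ak.1 ak.2 by rewrite mulr_ge0 // sumr_ge0.
have P_eq0 ak : Q ak.1 ak.2 = 0 -> P ak.1 ak.2 = 0.
  move=> /eqP; rewrite mulf_eq0 => /orP[] /eqP sum0.
    exact: psumr_eq0P (fun k _ => P_ge0 ak.1 k) sum0 ak.2 isT.
  exact: psumr_eq0P (fun a _ => P_ge0 a ak.2) sum0 ak.1 isT.
have := pinsker (fun ak => P_ge0 ak.1 ak.2) Q_ge0 P_eq0.
rewrite -(pair_bigA _ P) -(pair_bigA _ Q) P_sum1 Q_sum1 -sqrtrM // => /(_ erefl erefl).
by rewrite /kl_div -(pair_bigA _ (fun a k => kl_term (P a k) (Q a k))).
Qed.

End MutualInformation.

Lemma enorm_cross_moment_le (R : realType) (d : nat) (A K : finType)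
    (P : A -> K -> R) (m : K -> R) (s : A -> 'rV[R]_d) (M G : R) :
  (forall a k, 0 <= P a k) -> \sum_a \sum_k P a k = 1 ->
  \sum_a (\sum_k P a k) *: s a = 0 ->
  0 <= M -> (forall k, `|m k| <= M) -> 0 <= G -> (forall a, enorm (s a) <= G) ->
  enorm (\sum_a (\sum_k P a k * m k) *: s a)
    <= Num.sqrt 2 * G * M * Num.sqrt (mutual_info P).
Proof.
move=> P_ge0 P_sum1 s_centered M_ge0 mM G_ge0 sG.
pose pA a := \sum_k P a k; pose pK k := \sum_a P a k.
pose Q a k := pA a * pK k.
have -> : \sum_a (\sum_k P a k * m k) *: s a =
    \sum_(ak : A * K) ((P ak.1 ak.2 - Q ak.1 ak.2) * m ak.2) *: s ak.1.
  have e a : \sum_k ((P a k - Q a k) * m k) *: s a =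
      (\sum_k P a k * m k) *: s a - (\sum_k pK k * m k) *: (pA a *: s a).
    rewrite -scaler_suml scalerA -scalerBl [_ * pA a]mulrC mulr_sumr -sumrB.
    by congr (_ *: _); apply: eq_bigr => k _; rewrite /Q; ring.
  rewrite -(pair_bigA _ (fun a k => ((P a k - Q a k) * m k) *: s a)) /=.
  under [RHS]eq_bigr do rewrite e.
  by rewrite sumrB -scaler_sumr s_centered scaler0 subr0.
apply: le_trans (enorm_sumZ_le _ _) _.
apply: le_trans (_ : _ <= \sum_ak `|P ak.1 ak.2 - Q ak.1 ak.2| * (M * G)) _.
  apply: ler_sum => ak _; rewrite normrM -mulrA ler_wpM2l //.
  by rewrite ler_pM ?normr_ge0 ?enorm_ge0.
rewrite -mulr_suml mulrC.
have -> : Num.sqrt 2 * G * M * Num.sqrt (mutual_info P) =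
  M * G * (Num.sqrt 2 * Num.sqrt (mutual_info P)) by ring.
by rewrite ler_wpM2l ?mulr_ge0 //; apply: pinsker_mutual_info.
Qed.

Lemma is_derive_sum_fun (R : numFieldType) (V W : normedModType R) (I : Type)
    (r : seq I) (F : I -> V -> W) (dF : I -> W) (x v : V) :
  (forall i, is_derive x v (F i) (dF i)) ->
  is_derive x v (fun u => \sum_(i <- r) F i u) (\sum_(i <- r) dF i).
Proof.
move=> FD; rewrite -fct_sumE.
by elim/big_ind2: _ => // *; [exact: is_derive_cst | exact: is_deriveD].
Qed.

Lemma derive_ln_comp (R : realType) (V : normedModType R) (f : V -> R) (x v : V) :
  differentiable f x -> 0 < f x -> 'D_v (fun u => ln (f u)) x = 'D_v f x / f x.
Proof.
move=> df fx0.
have dln : differentiable (@ln R) (f x).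
  by apply/derivable1_diffP; apply: ex_derive; exact: is_derive1_ln.
rewrite -[fun u => _]/((@ln R) \o f) deriveE; last exact: differentiable_comp.
rewrite diff_comp // /= -[X in 'd _ _ X = _]mulr1 linearZ /= -deriveE //.
by rewrite -derive1E' // derive1E; have [_ ->] := is_derive1_ln fx0.
Qed.

Section ScoreFunction.
Variables (R : realType) (d : nat) (A : finType).
Variables (pi : 'rV[R]_d -> A -> R) (theta : 'rV[R]_d).
Hypothesis pi_gt0 : forall a, 0 < pi theta a.
Hypothesis pi_diff : forall a, differentiable (pi^~ a) theta.

Definition score a : 'rV[R]_d := grad (fun u => ln (pi u a)) theta.

Lemma is_derive_pi a i :
  is_derive theta (delta_mx 0 i) (pi^~ a) (pi theta a * score a 0 i).
Proof.
rewrite /score /grad mxE derive_ln_comp // mulrC divfK ?gt_eqF //.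
exact/derivableP/diff_derivable.
Qed.

Lemma grad_expectation (f : A -> R) :
  grad (fun u => \sum_a pi u a * f a) theta = \sum_a (pi theta a * f a) *: score a.
Proof.
apply/rowP => i; rewrite mxE summxE.
have fD a : is_derive theta (delta_mx 0 i) (fun u => pi u a * f a)
    (pi theta a * score a 0 i * f a).
  by have := is_derive_pi a i => ?; apply: is_derive_eq; rewrite scaler0 add0r [RHS]mulrC.
have ? := is_derive_sum_fun (index_enum A) fD; rewrite derive_val.
by apply: eq_bigr => a _; rewrite !mxE; ring.
Qed.

Lemma sum_score_eq0 : (forall t, \sum_a pi t a = 1) -> \sum_a pi theta a *: score a = 0.
Proof.
move=> pi_sum1; have := grad_expectation (fun=> 1).
have -> : (fun u => \sum_a pi u a * 1) = cst 1.
  by apply/funext => u; under eq_bigr do rewrite mulr1; exact: pi_sum1.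
under eq_bigr do rewrite mulr1.
by move=> <-; apply/rowP => i; rewrite !mxE derive_cst.
Qed.

End ScoreFunction.

Section Binning.
Variables (R : realType) (A : finType) (rew : A -> R) (Rlo delta : R) (B : nat).
Hypothesis delta_gt0 : 0 < delta.
Hypothesis rew_binned : forall a, exists k : 'I_B, inbin (Rlo + k%:R * delta) delta (rew a).

Lemma inbin_uniq r (k k' : 'I_B) :
  inbin (Rlo + k%:R * delta) delta r -> inbin (Rlo + k'%:R * delta) delta r -> k = k'.
Proof.
have le_bin (i j : 'I_B) : Rlo + i%:R * delta <= r -> r < Rlo + j%:R * delta + delta ->
    (i <= j)%N.
  move=> ir rj; rewrite -ltnS -(ltr_nat R) -(ltr_pM2r delta_gt0) -addn1 natrD; lra.
by move=> /andP[? ?] /andP[? ?]; apply/val_inj/eqP; rewrite eqn_leq !le_bin.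
Qed.

Definition bin a : 'I_B := xchoose (rew_binned a).

Definition midpoint (k : 'I_B) : R := Rlo + k%:R * delta + delta / 2.

Lemma inbinE a (k : 'I_B) : inbin (Rlo + k%:R * delta) delta (rew a) = (k == bin a).
Proof.
have binP := xchooseP (rew_binned a).
by apply/idP/eqP => [kP|->] //; apply: inbin_uniq kP binP.
Qed.

Lemma sum_joint_A_Rtilde (d : nat) (pi : 'rV[R]_d -> A -> R) theta a (F : 'I_B -> R) :
  \sum_k joint_A_Rtilde pi theta rew Rlo delta a k * F k = pi theta a * F (bin a).
Proof.
rewrite (bigD1 (bin a)) //= big1 => [|k /negbTE kb].
  by rewrite /joint_A_Rtilde inbinE eqxx mulr1 addr0.
by rewrite /joint_A_Rtilde inbinE kb mulr0 mul0r.
Qed.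

Lemma marginal_joint_A_Rtilde (d : nat) (pi : 'rV[R]_d -> A -> R) theta a :
  \sum_(k : 'I_B) joint_A_Rtilde pi theta rew Rlo delta a k = pi theta a.
Proof.
have := sum_joint_A_Rtilde pi theta a (fun=> 1).
by under eq_bigr do rewrite mulr1; rewrite mulr1.
Qed.

Lemma dist_midpoint_bin a : `|rew a - midpoint (bin a)| <= delta / 2.
Proof.
have /andP[? ?] := xchooseP (rew_binned a).
by rewrite ler_norml /midpoint /bin; apply/andP; split; lra.
Qed.

Lemma norm_midpoint_le (M : R) k :
  -M <= Rlo -> Rlo + B%:R * delta <= M -> `|midpoint k| <= M.
Proof.
have kB : k%:R * delta + delta <= B%:R * delta.
  by rewrite -[X in _ + X]mul1r -mulrDl ler_pM2r // natr1 ler_nat.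
have k0 : 0 <= k%:R * delta by rewrite mulr_ge0 // ltW.
have := delta_gt0; rewrite ler_norml /midpoint => d0 lo hi.
by apply/andP; split; lra.
Qed.

End Binning.

Theorem theorem2 (R : realType) (d : nat) (A : finType)
  (pi : 'rV[R]_d -> A -> R) (rew : A -> R)
  (Gmax Rmax Rlo Rhi delta : R) (B : nat) (theta : 'rV[R]_d) :
  (forall t a, 0 < pi t a) ->
  (forall t, \sum_(a : A) pi t a = 1) ->
  (forall t a, differentiable (fun u => pi u a) t) ->
  (forall a, enorm (grad (fun u => ln (pi u a)) theta) <= Gmax) ->
  (forall a, `|rew a| <= Rmax) ->
  -Rmax <= Rlo -> Rhi <= Rmax ->
  0 < delta ->
  Rhi = Rlo + B%:R * delta ->
  (forall a, exists k : 'I_B, inbin (Rlo + k%:R * delta) delta (rew a)) ->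
  enorm (grad (fun u => \sum_(a : A) pi u a * rew a) theta)
    <= Num.sqrt 2 * Gmax * Rmax
         * Num.sqrt (mutual_info (@joint_A_Rtilde R d A pi theta rew Rlo delta B))
       + Gmax * delta.
Proof.
move=> pi_gt0 pi_sum1 pi_diff score_le rew_le lo_ge hi_le delta_gt0 hiE binned.
have [a0 _] : exists a : A, true.
  case: (pickP A) => [a _|A0]; first by exists a.
  by have := pi_sum1 theta; rewrite big_pred0 // => /eqP; rewrite eq_sym oner_eq0.
have Gmax_ge0 := le_trans (enorm_ge0 _) (score_le a0).
pose s := score pi theta; pose m := midpoint Rlo delta (B:=B).
set P := @joint_A_Rtilde R d A pi theta rew Rlo delta B.
rewrite grad_expectation //.
have -> : \sum_a (pi theta a * rew a) *: s a = \sum_a (\sum_k P a k * m k) *: s a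
    + \sum_a (pi theta a * (rew a - m (bin binned a))) *: s a.
  rewrite -big_split; apply: eq_bigr => a _ /=.
  by rewrite sum_joint_A_Rtilde // -scalerDl; congr (_ *: _); ring.
have margA := marginal_joint_A_Rtilde delta_gt0 binned pi theta.
apply: le_trans (enormD _ _) (lerD _ _).
- apply: enorm_cross_moment_le => //.
  + by move=> a k; apply: mulr_ge0; [exact/ltW/pi_gt0 | exact: ler0n].
  + by under eq_bigr do rewrite margA.
  + by under eq_bigr do rewrite margA; apply: sum_score_eq0.
  + exact: le_trans (normr_ge0 _) (rew_le a0).
  + by move=> k; apply: norm_midpoint_le => //; rewrite -hiE.
- apply: le_trans (enorm_expectation_le (fun a => ltW (pi_gt0 theta a)) (pi_sum1 theta)
    (dist_midpoint_bin binned) score_le) _.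
  by rewrite mulrC ler_wpM2l //; lra.
Qed.
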